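(* Let $J$ be a set and $S_J$ the group of all permutations of $J$, acting on $\ell^\infty(J,\mathbb R)$ by $\sigma.x=x\circ\sigma^{-1}$. Then every $S_J$-invariant non-empty open convex cone in $\ell^\infty(J,\mathbb R)$ contains a constant function.
   Context: $\ell^\infty(J,\mathbb R)$ is the Banach space of bounded real functions on $J$ with the sup norm. A convex cone $W$ satisfies $W+W\subseteq W$ and $tW\subseteq W$ for all $t>0$. *)

From HB Require Import structures.
From mathcomp Require Import all_boot all_order all_algebra.
From mathcomp Require Import all_classical all_reals.
Set Implicit Arguments. Unset Strict Implicit. Unset Printing Implicit Defensive.
Import Order.TTheory GRing.Theory Num.Theory.
Local Open Scope classical_set_scope.
Local Open Scope ring_scope.

Definition linf_bounded (R : realType) (J : Type) (x : J -> R) : Prop :=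
  exists M : R, forall j, `|x j| <= M.

Definition linf_norm (R : realType) (J : Type) (x : J -> R) : R :=
  sup [set `|x j| | j in [set: J]].

Definition linf_open (R : realType) (J : Type) (W : set (J -> R)) : Prop :=
  (forall x, W x -> linf_bounded x) /\
  forall x, W x -> exists2 e : R, 0 < e &
    forall y, linf_bounded y -> linf_norm (fun j => y j - x j) < e -> W y.

Definition convex_cone (R : realType) (J : Type) (W : set (J -> R)) : Prop :=
  (forall x y, W x -> W y -> W (fun j => x j + y j)) /\
  (forall (t : R) x, 0 < t -> W x -> W (fun j => t * x j)).

Definition SJ_invariant (R : realType) (J : Type) (W : set (J -> R)) : Prop :=
  forall (sigma sigmainv : J -> J), cancel sigma sigmainv -> cancel sigmainv sigma ->
    forall x, W x -> W (fun j => x (sigmainv j)).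

From mathcomp Require Import all_boot all_order all_algebra.
From mathcomp Require Import all_classical all_reals.
From mathcomp Require Import ring lra.
Set Implicit Arguments.
Unset Strict Implicit.
Import Order.TTheory GRing.Theory Num.Theory.
Local Open Scope classical_set_scope.
Local Open Scope ring_scope.

(* Pair the coordinates where a bounded function x lies below the midpoint of
   its range with coordinates where it lies above (a Zorn-maximal matching,
   read as an involution sigma of J).  Since one side is fully matched, the
   average (x + sigma.x) / 2 has range at most 3/4 of that of x.  As W is an
   S_J-invariant convex cone, averaging preserves a uniform ball of radius d
   contained in W; iterating until the range is below d, the ball around the
   average contains a constant function. *)

Section CrossingInvolution.
Variables (J : Type) (L : pred J).

Definition crossing_matching (P : set (J * J)) : Prop :=
  [/\ forall a b, P (a, b) -> P (b, a),
      forall a b, P (a, b) -> L a != L b &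
      forall a b c, P (a, b) -> P (a, c) -> b = c].

Lemma exists_maximal_crossing_matching : exists P, crossing_matching P /\
  forall Q, P `<` Q -> ~ crossing_matching Q.
Proof.
apply: Zorn_bigcup => F FP Ftot; split.
- by move=> a b [X FX Xab]; exists X => //; case: (FP X FX) => + _ _; apply.
- by move=> a b [X FX Xab]; case: (FP X FX) => _ + _; apply.
- move=> a b c [X FX Xab] [Y FY Yac].
  have [XY|YX] := Ftot X Y FX FY.
  + by case: (FP Y FY) => _ _ Yuniq; apply: Yuniq (XY _ Xab) Yac.
  + by case: (FP X FX) => _ _ Xuniq; apply: Xuniq Xab (YX _ Yac).
Qed.

Lemma maximal_crossing_matching_saturates P :
  crossing_matching P -> (forall Q, P `<` Q -> ~ crossing_matching Q) ->
  (forall a, L a -> exists b, P (a, b)) \/ (forall a, ~~ L a -> exists b, P (a, b)).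
Proof.
move=> [Psym Pcross Puniq] Pmax.
apply: contrapT => /not_orP[/existsNP[a /not_implyP[La /forallNP aP]]
                            /existsNP[b /not_implyP[Lb /forallNP bP]]].
apply: (Pmax (P `|` [set (a, b); (b, a)])).
  split; first by move=> ? ?; left.
  by move=> /(_ (a, b) (or_intror (or_introl erefl))) /aP.
split.
- by move=> x y [/Psym|[[] -> ->|[] -> ->]]; [left|right; right|right; left].
- by move=> x y [/Pcross //|[[] -> ->|[] -> ->]]; rewrite La // (negbTE Lb).
- have abN : a <> b by move=> eab; move: Lb; rewrite -eab La.
  move=> x y z [Pxy|[[] xa yb|[] xb ya]] [Pxz|[[] xa' zb|[] xb' za]]; subst;
    by [ done | apply: Puniq Pxy Pxz | case: (aP _ Pxy) | case: (bP _ Pxy)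
       | case: (aP _ Pxz) | case: (bP _ Pxz) | case: abN ].
Qed.

Lemma crossing_matching_involution P : crossing_matching P ->
  exists sigma : J -> J, involutive sigma /\ forall a b, P (a, b) -> sigma a = b.
Proof.
move=> [Psym _ Puniq].
pose sigma j := if pselect (exists k, P (j, k)) is left h then projT1 (cid h) else j.
have sigmaP a b : P (a, b) -> sigma a = b.
  rewrite /sigma => Pab; case: pselect => [h|[]]; last by exists b.
  by case: (cid h) => /= k /Puniq; apply.
exists sigma; split=> // j.
rewrite {2}/sigma; case: pselect => [h|nh]; last first.
  by rewrite /sigma; case: pselect.
by case: (cid h) => /= k /Psym /sigmaP.
Qed.

End CrossingInvolution.

Lemma exists_crossing_involution (J : Type) (L : pred J) :
  exists sigma : J -> J, involutive sigma /\
    ((forall j, L j -> ~~ L (sigma j)) \/ (forall j, ~~ L j -> L (sigma j))).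
Proof.
have [P [PL Pmax]] := exists_maximal_crossing_matching L.
have [sigma [sigmaK sigmaP]] := crossing_matching_involution PL.
have cross a b : P (a, b) -> L (sigma a) = ~~ L a.
  by move=> Pab; rewrite (sigmaP _ _ Pab); case: PL => _ /(_ _ _ Pab); case: (L a); case: (L b).
exists sigma; split=> //.
by case: (maximal_crossing_matching_saturates PL Pmax) => sat; [left|right] => j Lj;
  have [b /cross ->] := sat j Lj; rewrite ?Lj.
Qed.

Lemma bernoulli_ineq (R : realDomainType) (h : R) (n : nat) :
  0 <= h -> 1 + n%:R * h <= (1 + h) ^+ n.
Proof.
move=> h0; elim: n => [|n IH]; first by rewrite expr0 mul0r addr0.
rewrite exprS -natr1.
have n0 : 0 <= n%:R :> R by rewrite ler0n.
nra.
Qed.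

Lemma exists_expr_le (R : archiRealFieldType) (q d D : R) :
  0 < q < 1 -> 0 < d -> exists n, D * q ^+ n <= d.
Proof.
move=> /andP[q0 q1] d0.
pose h := q^-1 - 1.
have h0 : 0 < h by rewrite /h subr_gt0 invf_gt1.
have qh : q * (1 + h) = 1 by rewrite /h addrC subrK mulfV ?gt_eqF.
have Dh0 : 0 <= `|D| / (d * h) by rewrite divr_ge0 // mulr_ge0 // ltW.
exists (Num.Def.archi_bound (`|D| / (d * h))).
set n := Num.Def.archi_bound _ in Dh0 *.
have Dn : `|D| < n%:R * (d * h).
  by rewrite -ltr_pdivrMr ?mulr_gt0 //; exact: archi_boundP.
have qn0 : 0 <= q ^+ n by rewrite exprn_ge0 ?ltW.
have qn : (1 + h) ^+ n * q ^+ n = 1 by rewrite -exprMn mulrC qh expr1n.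
apply: (le_trans (ler_wpM2r qn0 (ler_norm D))).
apply: (le_trans (ler_wpM2r qn0 (ltW Dn))).
have bern : d * ((1 + n%:R * h) * q ^+ n) <= d * ((1 + h) ^+ n * q ^+ n).
  apply: ler_wpM2l; first exact: ltW.
  by apply: ler_wpM2r => //; apply: bernoulli_ineq; exact: ltW.
rewrite qn mulr1 in bern.
apply: le_trans bern; nra.
Qed.

(* All points of one half of [[m, M]] are paired with points of the other half,
   so the averages avoid the outer quarter of [[m, M]] on that side. *)
Lemma involution_average_range (R : realFieldType) (J : Type) (y : J -> R) (m M : R) :
  (forall j, m <= y j <= M) -> exists sigma : J -> J, involutive sigma /\
  exists m' M', (forall j, m' <= (y j + y (sigma j)) / 2 <= M') /\
                M' - m' = (M - m) * (3 / 4).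
Proof.
move=> ymM; pose mid := (m + M) / 2.
have [sigma [sigmaK [low|high]]] := exists_crossing_involution (fun j => y j <= mid).
all: exists sigma; split=> //.
- exists ((m + mid) / 2), M; split; last by rewrite /mid; field.
  move=> j; have /andP[? ?] := ymM j; have /andP[? ?] := ymM (sigma j).
  have [yj|yj] := leP (y j) mid.
    by have := low j yj; rewrite -ltNge => ?; apply/andP; split; lra.
  by apply/andP; split; lra.
- exists m, ((mid + M) / 2); split; last by rewrite /mid; field.
  move=> j; have /andP[? ?] := ymM j; have /andP[? ?] := ymM (sigma j).
  have [yj|yj] := leP (y j) mid; first by apply/andP; split; lra.
  by have := high j; rewrite -ltNge => /(_ yj) ?; apply/andP; split; lra.
Qed.

(* [0 <= d] is needed for empty [J], where [linf_norm x] is [sup set0 = 0]. *)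
Lemma linf_norm_le (R : realType) (J : Type) (x : J -> R) (d : R) :
  0 <= d -> (forall j, `|x j| <= d) -> linf_norm x <= d.
Proof.
move=> d0 xd; rewrite /linf_norm.
have [[j _]|J0] := pselect (exists j : J, True).
  by apply: ge_sup; [exists `|x j|, j | move=> _ [k _ <-]].
rewrite (_ : [set _ | _ in _] = set0) ?sup0 //.
by apply/seteqP; split=> // r [j]; case: J0; exists j.
Qed.

Definition contains_ball (R : numDomainType) (J : Type) (W : set (J -> R)) (d : R) (y : J -> R) :=
  forall z, (forall j, `|z j - y j| <= d) -> W z.

Lemma linf_open_contains_ball (R : realType) (J : Type) (W : set (J -> R)) x :
  linf_open W -> W x -> exists2 d, 0 < d & contains_ball W d x.
Proof.
move=> [Wb Wo] Wx; have [e e0 He] := Wo x Wx; have [B xB] := Wb x Wx.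
exists (e / 2); first by rewrite divr_gt0.
move=> z zx; apply: He.
  exists (e / 2 + B) => j.
  by rewrite -[z j](subrK (x j)); apply: le_trans (ler_normD _ _) _; apply: lerD.
by apply: le_lt_trans (linf_norm_le _ zx) _; [rewrite divr_ge0 ?ltW | lra].
Qed.

Section InvariantCone.
Variables (R : realType) (J : Type) (W : set (J -> R)).
Hypotheses (Wcone : convex_cone W) (Winv : SJ_invariant W).

(* With [a] the average, [z] is the midpoint of [y + (z - a)] and of the
   [sigma]-image of [y + (z - a) \o sigma], both in the ball around [y]. *)
Lemma contains_ball_average d y sigma : involutive sigma ->
  contains_ball W d y -> contains_ball W d (fun j => (y j + y (sigma j)) / 2).
Proof.
move=> sigmaK yW z zd; pose a j := (y j + y (sigma j)) / 2.
have [Wadd Wscale] := Wcone.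
have shifted_in_W (u : J -> R) : (forall j, `|u j| <= d) -> W (fun j => y j + u j).
  by move=> ud; apply: yW => j; rewrite addrC addKr.
have W1 : W (fun j => y j + (z j - a j)) by apply: shifted_in_W; exact: zd.
have W2 : W (fun j => y (sigma j) + (z j - a j)).
  have := Winv sigmaK sigmaK (shifted_in_W (fun j => z (sigma j) - a (sigma j)) (fun j => zd _)).
  by congr W; apply/funext => j /=; rewrite sigmaK.
have half0 : 0 < 2^-1 :> R by rewrite invr_gt0.
have := Wscale _ _ half0 (Wadd _ _ W1 W2).
by congr W; apply/funext => j; rewrite /a; field.
Qed.

Lemma contains_ball_range_shrink d y m M :
  contains_ball W d y -> (forall j, m <= y j <= M) ->
  forall n, exists y' m' M', [/\ contains_ball W d y',
    forall j, m' <= y' j <= M' & M' - m' = (M - m) * (3 / 4) ^+ n].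
Proof.
move=> yW ymM; elim=> [|n [y' [m' [M' [y'W y'mM osc]]]]].
  by exists y, m, M; rewrite expr0 mulr1.
have [sigma [sigmaK [m'' [M'' [avg_mM osc']]]]] := involution_average_range y'mM.
exists (fun j => (y' j + y' (sigma j)) / 2), m'', M''; split=> //.
  exact: contains_ball_average.
by rewrite osc' osc exprSr -mulrA.
Qed.

End InvariantCone.

Theorem lemma4p5 (R : realType) (J : Type) (W : set (J -> R)) :
  W !=set0 -> linf_open W -> convex_cone W -> SJ_invariant W ->
  exists c : R, W (fun _ => c).
Proof.
move=> [x Wx] Wopen Wcone Winv.
have [d d0 xW] := linf_open_contains_ball Wopen Wx.
have [B xB] := Wopen.1 x Wx.
have xrange j : - B <= x j <= B by rewrite -ler_norml.
have [n small] : exists n, (B - - B) * (3 / 4) ^+ n <= d.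
  by apply: exists_expr_le d0; apply/andP; split; lra.
have [y [m [M [yW ymM yosc]]]] := contains_ball_range_shrink Wcone Winv xW xrange n.
exists m; apply: yW => j; have /andP[? ?] := ymM j.
by rewrite ler_norml; apply/andP; split; lra.
Qed.
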